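(* Let $\alpha,\beta,p\in\mathbb{C}$ be constants and let $h,g:\mathbb{Z}^2\to\mathbb{C}$ satisfy $$\widehat{h}-\widetilde{h}=\widetilde{\widetilde{g}}-g,\qquad (h+\widetilde g)\,g=\beta^2-\alpha^2 .$$ Let $\varphi_1,\varphi_2:\mathbb{Z}^2\to\mathbb{C}$ be two linearly independent solutions of the Lax pair $$\widetilde{\widetilde{\varphi}}+h\,\widetilde{\varphi}+\alpha^2\varphi=p^2\varphi,\qquad \widehat{\varphi}=\widetilde{\varphi}-g\,\varphi .$$ Then there is a constant $\rho$ such that for all $n,m\in\mathbb{Z}$ $$\varphi_1\widetilde{\varphi}_2-\varphi_2\widetilde{\varphi}_1=\varphi_1\widehat{\varphi}_2-\varphi_2\widehat{\varphi}_1=\rho\,s^{2n}t^{2m},$$ where $s^2=\alpha^2-p^2$ and $t^2=\beta^2-p^2$.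
   Context: Shift notation: for a function $f$ on $\mathbb{Z}^2$ (variables $n,m$), $\widetilde f(n,m)=f(n+1,m)$, $\widehat f(n,m)=f(n,m+1)$, and combined accents denote composed shifts. *)

From HB Require Import structures.
From mathcomp Require Import all_boot all_order all_algebra.
From mathcomp Require Export complex.
From mathcomp Require Export reals.
Set Implicit Arguments. Unset Strict Implicit. Unset Printing Implicit Defensive.
Import Order.TTheory GRing.Theory Num.Theory.
Local Open Scope ring_scope.

Definition tshift {T : Type} (f : int -> int -> T) : int -> int -> T :=
  fun n m => f (n + 1) m.
Definition hshift {T : Type} (f : int -> int -> T) : int -> int -> T :=
  fun n m => f n (m + 1).

Definition lin_indep2 {K : fieldType} (f1 f2 : int -> int -> K) : Prop :=
  forall c1 c2 : K, (forall n m, c1 * f1 n m + c2 * f2 n m = 0) ->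
    c1 = 0 /\ c2 = 0.

From HB Require Import structures.
From mathcomp Require Import all_boot all_order all_algebra.
From mathcomp Require Import complex reals.
From mathcomp Require Import ring.
Set Implicit Arguments. Unset Strict Implicit. Unset Printing Implicit Defensive.
Import Order.TTheory GRing.Theory Num.Theory.
Local Open Scope ring_scope.

(* The Casoratian of two solutions is multiplied by [alpha^2 - p^2] under
   the tilde shift (the spatial equation is a second order recurrence with
   constant coefficient [alpha^2 - p^2] in front of [phi]) and by
   [beta^2 - p^2] under the hat shift (use the time equation twice and then
   [(h + g~) g = beta^2 - alpha^2]). A function of two integer variables
   with constant shift multipliers is a product of two geometric sequences. *)

Lemma geometric_int (K : fieldType) (x : K) (f : int -> K) :
  (forall n, f (n + 1) = x * f n) -> forall n, f n = f 0 * x ^ n.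
Proof.
have [-> fS | x_neq0 fS] := eqVneq x 0.
  have f0 k : f k = 0 by rewrite -(subrK 1 k) fS mul0r.
  by move=> n; rewrite !f0 mul0r.
elim/int_rec => [|n IHn|n IHn].
- by rewrite expr0z mulr1.
- by rewrite intS addrC fS IHn -addrC -intS exprSz mulrCA.
- have fN : f (- n%:Z) = x * f (- n.+1%:Z).
    by rewrite -fS intS opprD addrAC addNr add0r.
  have -> : f (- n.+1%:Z) = x^-1 * f (- n%:Z) by rewrite fN mulKf.
  by rewrite IHn intS opprD expfzDr // exprN1 mulrCA.
Qed.

Lemma geometric_int2 (K : fieldType) (x y : K) (f : int -> int -> K) :
  (forall n m, f (n + 1) m = x * f n m) ->
  (forall n m, f n (m + 1) = y * f n m) ->
  forall n m, f n m = f 0 0 * x ^ n * y ^ m.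
Proof.
move=> fSn fSm n m.
by rewrite (geometric_int (fSn^~ m)) (geometric_int (fSm 0)) mulrAC.
Qed.

Section LaxPair.

Variables (K : comPzRingType) (alpha beta p : K) (h g : int -> int -> K).

Definition lax_space (phi : int -> int -> K) : Prop :=
  forall n m, tshift (tshift phi) n m + h n m * tshift phi n m
              + alpha ^+ 2 * phi n m = p ^+ 2 * phi n m.

Definition lax_time (phi : int -> int -> K) : Prop :=
  forall n m, hshift phi n m = tshift phi n m - g n m * phi n m.

Definition casoratian (phi1 phi2 : int -> int -> K) (n m : int) : K :=
  phi1 n m * phi2 (n + 1) m - phi2 n m * phi1 (n + 1) m.

Lemma lax_space_step phi : lax_space phi -> forall n m,
  phi (n + 1 + 1) m = (p ^+ 2 - alpha ^+ 2) * phi n m - h n m * phi (n + 1) m.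
Proof. by move=> phiS n m; rewrite mulrBl -(phiS n m) /tshift; ring. Qed.

Lemma lax_diag_step phi : lax_space phi -> lax_time phi -> forall n m,
  phi (n + 1) (m + 1)
    = (p ^+ 2 - alpha ^+ 2) * phi n m - (h n m + g (n + 1) m) * phi (n + 1) m.
Proof.
move=> phiS phiT n m; have := phiT (n + 1) m; rewrite /hshift /tshift => ->.
by rewrite lax_space_step //; ring.
Qed.

Variables phi1 phi2 : int -> int -> K.
Hypotheses (phi1S : lax_space phi1) (phi2S : lax_space phi2).
Hypotheses (phi1T : lax_time phi1) (phi2T : lax_time phi2).

Lemma casoratian_hshift n m :
  phi1 n m * hshift phi2 n m - phi2 n m * hshift phi1 n m
    = casoratian phi1 phi2 n m.
Proof. by rewrite phi1T phi2T /casoratian /tshift; ring. Qed.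

Lemma casoratianSn n m :
  casoratian phi1 phi2 (n + 1) m
    = (alpha ^+ 2 - p ^+ 2) * casoratian phi1 phi2 n m.
Proof. by rewrite /casoratian !lax_space_step //; ring. Qed.

Hypothesis hg : forall n m, (h n m + tshift g n m) * g n m = beta ^+ 2 - alpha ^+ 2.

Lemma casoratianSm n m :
  casoratian phi1 phi2 n (m + 1)
    = (beta ^+ 2 - p ^+ 2) * casoratian phi1 phi2 n m.
Proof.
have beta2 : beta ^+ 2 = (h n m + g (n + 1) m) * g n m + alpha ^+ 2.
  by rewrite [_ * _]hg subrK.
rewrite /casoratian !lax_diag_step //.
have := phi1T n m; have := phi2T n m; rewrite /hshift /tshift => -> ->.
by rewrite beta2; ring.
Qed.

End LaxPair.

Theorem lemma2p1 (R : realType) (alpha beta p : R[i])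
  (h g phi1 phi2 : int -> int -> R[i])
  (Hh : forall n m, hshift h n m - tshift h n m
                    = tshift (tshift g) n m - g n m)
  (Hg : forall n m, (h n m + tshift g n m) * g n m = beta ^+ 2 - alpha ^+ 2)
  (Hphi1a : forall n m, tshift (tshift phi1) n m + h n m * tshift phi1 n m
                        + alpha ^+ 2 * phi1 n m = p ^+ 2 * phi1 n m)
  (Hphi1b : forall n m, hshift phi1 n m = tshift phi1 n m - g n m * phi1 n m)
  (Hphi2a : forall n m, tshift (tshift phi2) n m + h n m * tshift phi2 n m
                        + alpha ^+ 2 * phi2 n m = p ^+ 2 * phi2 n m)
  (Hphi2b : forall n m, hshift phi2 n m = tshift phi2 n m - g n m * phi2 n m)
  (Hind : lin_indep2 phi1 phi2)
  (s t : R[i]) (Hs : s ^+ 2 = alpha ^+ 2 - p ^+ 2)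
  (Ht : t ^+ 2 = beta ^+ 2 - p ^+ 2) :
  exists rho : R[i], forall n m : int,
    phi1 n m * tshift phi2 n m - phi2 n m * tshift phi1 n m
      = phi1 n m * hshift phi2 n m - phi2 n m * hshift phi1 n m /\
    phi1 n m * hshift phi2 n m - phi2 n m * hshift phi1 n m
      = rho * s ^ (2 * n) * t ^ (2 * m).
Proof.
exists (casoratian phi1 phi2 0 0) => n m.
rewrite (casoratian_hshift Hphi1b Hphi2b); split; first by [].
rewrite -!exprz_exp -!exprnP Hs Ht.
apply: geometric_int2.
- exact: casoratianSn Hphi1a Hphi2a.
- exact: casoratianSm Hphi1a Hphi2a Hphi1b Hphi2b Hg.
Qed.
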